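(* Let $m\ge 2$, let $A\in\mathbb{R}^{m\times m}$ be a symmetric matrix with zero diagonal and nonnegative entries, and let $k\in\{1,\ldots,\lfloor m/2\rfloor\}$. Let $A_k$ be the $(2m-2k)\times(2m-2k)$ symmetric matrix with zero diagonal given in block form by \[ A_k:=\begin{bmatrix} A & \mathbf{1}_{m,m-2k}\\ \mathbf{1}_{m-2k,m} & \mathbf{0}\end{bmatrix}, \] where $\mathbf{1}_{p,q}$ is the $p\times q$ matrix all of whose entries equal $1$ and $\mathbf{0}$ is the $(m-2k)\times(m-2k)$ zero matrix. Then \[ \mathrm{haf}_k A=\frac{\mathrm{haf}\, A_k}{(m-2k)!}. \]
   Context: For a real symmetric $2n\times 2n$ matrix $C=[c_{ij}]$, let $\mathcal{M}(K_{2n})$ be the set of perfect matchings of the complete graph on $\{1,\ldots,2n\}$, each written as $\{(i_1,j_1),\ldots,(i_n,j_n)\}$ with $i_l<j_l$; the hafnian is $\mathrm{haf}\, C:=\sum_{\{(i_1,j_1),\ldots,(i_n,j_n)\}\in\mathcal{M}(K_{2n})}\prod_{l=1}^n c_{i_lj_l}$ (and $\mathrm{haf}$ of the empty $0\times 0$ matrix is $1$). For $1\le 2k\le m$, $Q_{2k,m}$ is the set of $2k$-element subsets $\alpha=\{\alpha_1<\cdots<\alpha_{2k}\}$ of $\{1,\ldots,m\}$, $A[\alpha,\alpha]:=[a_{\alpha_i\alpha_j}]_{i,j=1}^{2k}$, and $\mathrm{haf}_k A:=\sum_{\alpha\in Q_{2k,m}}\mathrm{haf}\, A[\alpha,\alpha]$.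 *)

From HB Require Import structures.
From mathcomp Require Import all_boot all_order all_algebra.
Set Implicit Arguments. Unset Strict Implicit. Unset Printing Implicit Defensive.
Import Order.TTheory GRing.Theory Num.Theory.
Local Open Scope ring_scope.

Definition is_perfect_matching (N : nat) (M : {set 'I_N * 'I_N}) : bool :=
  [forall p in M, (p.1 < p.2)%N] &&
  [forall x : 'I_N, #|[set p in M | (p.1 == x) || (p.2 == x)]| == 1%N].

Definition haf (R : comNzRingType) (N : nat) (C : 'M[R]_N) : R :=
  \sum_(M : {set 'I_N * 'I_N} | is_perfect_matching M)
     \prod_(p in M) C p.1 p.2.

(* Entry of A at natural indices (0 outside the range). *)
Definition mx_at (R : comNzRingType) (m : nat) (A : 'M[R]_m) (i j : nat) : R :=
  match insub i, insub j with
  | Some i', Some j' => A i' j'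
  | _, _ => 0
  end.

Definition princ_submx (R : comNzRingType) (m k : nat) (A : 'M[R]_m)
    (alpha : {set 'I_m}) : 'M[R]_(2 * k) :=
  let s := sort leq [seq val x | x <- enum alpha] in
  \matrix_(i < 2 * k, j < 2 * k) mx_at A (nth 0%N s i) (nth 0%N s j).

Definition haf_k (R : comNzRingType) (m k : nat) (A : 'M[R]_m) : R :=
  \sum_(alpha : {set 'I_m} | #|alpha| == (2 * k)%N) haf (princ_submx k A alpha).

Definition A_k (R : comNzRingType) (m k : nat) (A : 'M[R]_m) : 'M[R]_(m + (m - 2 * k)) :=
  block_mx A (const_mx 1) (const_mx 1) 0.

From HB Require Import structures.
From mathcomp Require Import all_boot all_order all_algebra.
Set Implicit Arguments. Unset Strict Implicit. Unset Printing Implicit Defensive.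
Import Order.TTheory GRing.Theory Num.Theory.
Local Open Scope ring_scope.

(** Relabelling alpha increasingly identifies haf A[alpha, alpha] with the sum of
    the weights of the perfect matchings of the vertex set alpha, so haf_k A sums
    the weights of all matchings of A with 2k vertices.  In a perfect matching of
    the vertices of A_k a pair inside the zero block has weight 0, so only the
    matchings joining each of the m - 2k new vertices to its own vertex of A
    contribute; these new pairs have weight 1 and the remaining pairs form a
    matching of A with 2k vertices.  Conversely a matching of A on a 2k-set alpha
    extends in exactly (m - 2k)! ways, one for each bijection from the new
    vertices onto the complement of alpha. *)

Definition incident (T : eqType) (x : T) (p : T * T) := (p.1 == x) || (p.2 == x).

Lemma incident_fst (T : eqType) (p : T * T) : incident p.1 p.
Proof. by rewrite /incident eqxx. Qed.

Lemma incident_snd (T : eqType) (p : T * T) : incident p.2 p.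
Proof. by rewrite /incident eqxx orbT. Qed.

Definition map_pair (T U : Type) (f : T -> U) (p : T * T) : U * U := (f p.1, f p.2).

Lemma map_pair_inj (T U : Type) (f : T -> U) : injective f -> injective (map_pair f).
Proof. by move=> f_inj [a b] [c d] [/f_inj -> /f_inj ->]. Qed.

Lemma incident_map_pair (T U : eqType) (f : T -> U) x p :
  injective f -> incident (f x) (map_pair f p) = incident x p.
Proof. by move=> f_inj; rewrite /incident /= !(inj_eq f_inj). Qed.

Lemma incident_map_pair_inv (T U : eqType) (f : T -> U) y p :
  incident y (map_pair f p) -> exists2 x, y = f x & incident x p.
Proof.
by case/orP => /eqP <-; [exists p.1 | exists p.2]; rewrite ?incident_fst ?incident_snd.
Qed.

Section MatchingsOn.

Variable N : nat.
Implicit Types (S : {set 'I_N}) (M : {set 'I_N * 'I_N}).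

Definition perfect_matching_on S M : bool :=
  [forall p in M, (p.1 < p.2)%N] &&
  [forall x, #|[set p in M | incident x p]| == (x \in S)].

Lemma perfect_matching_onP S M :
  perfect_matching_on S M <->
  [/\ forall p, p \in M -> (p.1 < p.2)%N,
      forall x, x \in S -> exists2 p, p \in M & incident x p,
      forall x p, p \in M -> incident x p -> x \in S &
      forall x p q, p \in M -> q \in M -> incident x p -> incident x q -> p = q].
Proof.
rewrite /perfect_matching_on; split.
- case/andP => /forall_inP ordered /forallP card_incident.
  have inside x p : p \in M -> incident x p -> x \in S.
    move=> pM xp; move: (card_incident x); apply: contraTT => xS.
    by rewrite (negbTE xS) cards_eq0; apply/set0Pn; exists p; rewrite inE pM.
  split => // [x xS | x p q pM qM xp xq].
  + move: (card_incident x); rewrite xS => /cards1P [p Ex].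
    by have := set11 p; rewrite -Ex inE => /andP [pM xp]; exists p.
  + move: (card_incident x); rewrite (inside x p) // => /cards1P [r Ex].
    have onlyr y : y \in M -> incident x y -> y = r.
      by move=> yM xy; apply/set1P; rewrite -Ex inE yM.
    by rewrite (onlyr p pM xp) (onlyr q qM xq).
- case=> ordered covers inside disjoint; apply/andP; split; first exact/forall_inP.
  apply/forallP => x; have [xS | xS] := boolP (x \in S).
    have [p pM xp] := covers x xS; apply/cards1P; exists p; apply/setP => q.
    rewrite !inE; apply/andP/eqP => [[qM xq] | -> //].
    exact: disjoint _ _ _ qM pM xq xp.
  rewrite cards_eq0; apply/eqP/setP => p; rewrite !inE.
  by apply: contraNF xS => /andP [pM xp]; exact: inside _ _ pM xp.
Qed.

Lemma is_perfect_matchingE M : is_perfect_matching M = perfect_matching_on setT M.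
Proof. by congr (_ && _); apply: eq_forallb => x; rewrite in_setT. Qed.

Definition covered M := [set x | [exists p in M, incident x p]].

Lemma perfect_matching_on_covered S M : perfect_matching_on S M -> covered M = S.
Proof.
case/perfect_matching_onP => _ covers inside _; apply/setP => x; rewrite inE.
apply/exists_inP/idP => [[p pM xp] | xS]; first exact: inside xp.
by have [p pM xp] := covers x xS; exists p.
Qed.

Definition is_matching M := perfect_matching_on (covered M) M.

End MatchingsOn.

Definition matching_weight (R : comNzRingType) N (C : 'M[R]_N)
    (M : {set 'I_N * 'I_N}) : R :=
  \prod_(p in M) C p.1 p.2.

Lemma hafE (R : comNzRingType) N (C : 'M[R]_N) :
  haf C = \sum_(M | perfect_matching_on setT M) matching_weight C M.
Proof. by apply: eq_bigl => M; rewrite is_perfect_matchingE. Qed.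

Section Reindex.

Variables (n N : nat) (f : 'I_n -> 'I_N).
Hypothesis f_mono : forall i j, (f i <= f j)%N = (i <= j)%N.
Implicit Types (S : {set 'I_n}) (M : {set 'I_n * 'I_n}).

Let f_inj : injective f.
Proof. by move=> i j fij; apply/val_inj/anti_leq; rewrite -!f_mono fij leqnn. Qed.

Let f_mono_lt i j : (f i < f j)%N = (i < j)%N.
Proof. by rewrite !ltnNge f_mono. Qed.

Lemma perfect_matching_on_map S M : perfect_matching_on S M ->
  perfect_matching_on (f @: S) (map_pair f @: M).
Proof.
case/perfect_matching_onP => ordered covers inside disjoint.
apply/perfect_matching_onP; split.
- by move=> _ /imsetP [q qM ->]; rewrite f_mono_lt ordered.
- move=> _ /imsetP [i iS ->]; have [q qM iq] := covers i iS.
  by exists (map_pair f q); rewrite ?imset_f ?incident_map_pair.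
- move=> y _ /imsetP [q qM ->] /incident_map_pair_inv [i -> iq].
  exact/imset_f/(inside _ _ qM iq).
- move=> y _ _ /imsetP [q qM ->] /imsetP [q' q'M ->].
  case/incident_map_pair_inv => i -> iq; rewrite incident_map_pair // => iq'.
  by rewrite (disjoint _ _ _ qM q'M iq iq').
Qed.

Lemma perfect_matching_on_premap S (M' : {set 'I_N * 'I_N}) :
  perfect_matching_on (f @: S) M' -> exists2 M, perfect_matching_on S M & M' = map_pair f @: M.
Proof.
move=> /perfect_matching_onP [ordered covers inside disjoint].
have M'_image p : p \in M' -> exists q, p = map_pair f q.
  move=> pM; have /imsetP [i _ e1] := inside p.1 p pM (incident_fst p).
  have /imsetP [j _ e2] := inside p.2 p pM (incident_snd p).
  by exists (i, j); rewrite /map_pair -e1 -e2 -surjective_pairing.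
exists (map_pair f @^-1: M'); last first.
  apply/setP => p; apply/idP/imsetP => [pM | [q qM ->]]; last by rewrite inE in qM.
  by have [q epq] := M'_image p pM; exists q; rewrite // inE -epq.
apply/perfect_matching_onP; split.
- by move=> q; rewrite inE => /ordered; rewrite f_mono_lt.
- move=> i iS; have [p pM ip] := covers (f i) (imset_f f iS).
  have [q epq] := M'_image p pM; exists q; first by rewrite inE -epq.
  by rewrite -(incident_map_pair _ _ f_inj) -epq.
- move=> i q; rewrite inE -(incident_map_pair _ _ f_inj) => qM /(inside _ _ qM).
  by rewrite mem_imset.
- move=> i q q'; rewrite !inE => qM q'M iq iq'; apply: (map_pair_inj f_inj).
  by apply: (disjoint (f i)); rewrite ?incident_map_pair.
Qed.

Lemma haf_reindex (R : comNzRingType) (B : 'M[R]_N) :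
  haf (\matrix_(i, j) B (f i) (f j)) =
  \sum_(M | perfect_matching_on (f @: setT) M) matching_weight B M.
Proof.
rewrite hafE.
transitivity (\sum_(M in [set M | perfect_matching_on setT M])
                matching_weight B (map_pair f @: M)).
  apply: eq_big => M; first by rewrite inE.
  move=> _; rewrite /matching_weight big_imset /=; last first.
    by move=> p q _ _; apply: map_pair_inj.
  by apply: eq_bigr => p _; rewrite mxE.
rewrite -(big_imset (matching_weight B)) /=; last first.
  by move=> M1 M2 _ _; apply/imset_inj/map_pair_inj.
apply: eq_bigl => M'; apply/imsetP/idP => [[M] | /perfect_matching_on_premap [M]].
  by rewrite inE => /perfect_matching_on_map M_perfect ->.
by exists M; rewrite ?inE.
Qed.

End Reindex.

Lemma sorted_enum_val N (alpha : {set 'I_N}) : sorted ltn [seq val x | x <- enum alpha].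
Proof.
rewrite -[enum _](eq_filter (mem_enum _)) -(eq_filter (mem_map val_inj _)) -filter_map.
by rewrite (sorted_filter ltn_trans) // unlock val_ord_enum iota_ltn_sorted.
Qed.

Section PrincipalSubmatrix.

Variables (R : comNzRingType) (m k : nat) (A : 'M[R]_m) (alpha : {set 'I_m}).
Hypothesis alpha_card : #|alpha| = (2 * k)%N.

Let alpha_nth (i : 'I_(2 * k)) : 'I_m := enum_val (cast_ord (esym alpha_card) i).

Let val_alpha_nth i : val (alpha_nth i) = nth 0%N [seq val x | x <- enum alpha] i.
Proof.
rewrite (nth_map (alpha_nth i)) -?cardE ?alpha_card //.
by rewrite [in LHS]/alpha_nth (enum_val_nth (alpha_nth i)).
Qed.

Let alpha_nth_mono i j : (alpha_nth i <= alpha_nth j)%N = (i <= j)%N.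
Proof.
rewrite !val_alpha_nth; set s := [seq val x | x <- enum alpha].
have s_ltn := sorted_enum_val alpha; have s_leq : sorted leq s.
  by apply: sub_sorted s_ltn => a b /ltnW.
have s_idx (l : 'I_(2 * k)) : (l : nat) \in [pred n | n < size s]%N.
  by rewrite inE size_map -cardE alpha_card ltn_ord.
case: (leqP i j) => [le_ij | lt_ji]; first exact: (sorted_leq_nth leq_trans leqnn).
by apply/negbTE; rewrite -ltnNge (sorted_ltn_nth ltn_trans).
Qed.

Let alpha_nth_image : alpha_nth @: setT = alpha.
Proof.
apply/setP => x; apply/imsetP/idP => [[i _ ->] | xA]; first exact: enum_valP.
exists (cast_ord alpha_card (enum_rank_in xA x)) => //.
by rewrite /alpha_nth cast_ordK enum_rankK_in.
Qed.

Lemma haf_princ_submx :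
  haf (princ_submx k A alpha) = \sum_(M | perfect_matching_on alpha M) matching_weight A M.
Proof.
have -> : princ_submx k A alpha = \matrix_(i, j) A (alpha_nth i) (alpha_nth j).
  apply/matrixP => i j; rewrite !mxE sorted_sort ?(sub_sorted _ (sorted_enum_val alpha)) //.
  - by rewrite -!val_alpha_nth /mx_at !valK.
  - exact: leq_trans.
  - by move=> a b /ltnW.
by rewrite haf_reindex // alpha_nth_image.
Qed.

End PrincipalSubmatrix.

Lemma haf_kE (R : comNzRingType) m k (A : 'M[R]_m) :
  haf_k k A = \sum_(M | (#|covered M| == 2 * k)%N && is_matching M) matching_weight A M.
Proof.
rewrite [RHS](partition_big (@covered m) (fun S : {set 'I_m} => #|S| == 2 * k)%N) /=.
  2: by move=> M /andP [].
apply: eq_bigr => S /eqP card_S; rewrite haf_princ_submx //; apply: eq_bigl => M.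
apply/idP/idP => [M_perfect | /andP [/andP [_ M_matching] /eqP <-] //].
by rewrite /is_matching (perfect_matching_on_covered M_perfect) card_S M_perfect !eqxx.
Qed.

Section BlockMatchings.

Variables m n : nat.
Implicit Types M : {set 'I_(m + n) * 'I_(m + n)}.

(* Pairs are ordered, so this says that no pair lies in the zero block of A_k. *)
Definition left_anchored M := [forall p in M, (p.1 < m)%N].

Definition left_part M : {set 'I_m * 'I_m} := map_pair (lshift n) @^-1: M.

Definition extend_matching (M' : {set 'I_m * 'I_m}) (f : 'I_n -> 'I_m) :
    {set 'I_(m + n) * 'I_(m + n)} :=
  map_pair (lshift n) @: M' :|: [set (lshift n (f j), rshift m j) | j : 'I_n].

Lemma incident_lift (i : 'I_m) q :
  incident (lshift n i) (map_pair (lshift n) q) = incident i q.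
Proof. exact/incident_map_pair/lshift_inj. Qed.

Lemma incident_rshift_lift (j : 'I_n) q :
  incident (rshift m j) (map_pair (lshift n) q) = false.
Proof. by rewrite /incident /= !eq_lrshift. Qed.

Lemma incident_lshift_cross (i a : 'I_m) (b : 'I_n) :
  incident (lshift n i) (lshift n a, rshift m b) = (a == i).
Proof. by rewrite /incident /= eq_lshift eq_rlshift orbF. Qed.

Lemma incident_rshift_cross (j b : 'I_n) (a : 'I_m) :
  incident (rshift m j) (lshift n a, rshift m b) = (b == j).
Proof. by rewrite /incident /= eq_lrshift eq_rshift. Qed.

Section Partner.

Variable M : {set 'I_(m + n) * 'I_(m + n)}.
Hypotheses (M_perfect : perfect_matching_on setT M) (M_anchored : left_anchored M).

Lemma exists_partner :
  exists f : {ffun 'I_n -> 'I_m}, forall j, (lshift n (f j), rshift m j) \in M.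
Proof.
have /perfect_matching_onP [_ covers _ _] := M_perfect.
suff /fin_all_exists [f f_partner] : forall j, exists i, (lshift n i, rshift m j) \in M.
  by exists (finfun f) => j; rewrite ffunE.
move=> j; have [[a b] pM jp] := covers (rshift m j) (in_setT _).
case: (split_ordP a) (forall_inP M_anchored _ pM) => // i a_i _.
move: jp; rewrite /incident /= a_i eq_lrshift /= => /eqP b_j.
by exists i; rewrite -a_i -b_j.
Qed.

Variable f : 'I_n -> 'I_m.
Hypothesis f_partner : forall j, (lshift n (f j), rshift m j) \in M.

Lemma partner_inj : injective f.
Proof.
have /perfect_matching_onP [_ _ _ disjoint] := M_perfect.
move=> j1 j2 f12; have := disjoint (lshift n (f j1)) _ _ (f_partner j1) (f_partner j2).
by rewrite !incident_lshift_cross f12 eqxx => /(_ isT isT) /(congr1 snd) /rshift_inj.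
Qed.

Lemma extend_left_part : extend_matching (left_part M) f = M.
Proof.
have /perfect_matching_onP [_ _ _ disjoint] := M_perfect.
apply/setP => -[a b]; rewrite in_setU; apply/orP/idP => [[] /imsetP [x xM ->] | pM].
- by rewrite inE in xM.
- exact: f_partner.
case: (split_ordP a) (forall_inP M_anchored _ pM) (pM) => // i -> _ {}pM.
case: (split_ordP b) (pM) => [i' -> {}pM | j -> {}pM]; [left | right]; apply/imsetP.
  by exists (i, i'); rewrite ?inE.
exists j => //; have := disjoint (rshift m j) _ _ pM (f_partner j).
by rewrite !incident_rshift_cross eqxx => /(_ isT isT).
Qed.

Lemma left_part_perfect : perfect_matching_on (~: (f @: setT)) (left_part M).
Proof.
have /perfect_matching_onP [ordered covers _ disjoint] := M_perfect.
apply/perfect_matching_onP; split.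
- by move=> q; rewrite inE => /ordered.
- move=> i; rewrite inE => i_free; have [p pM ip] := covers (lshift n i) (in_setT _).
  rewrite -extend_left_part in pM; case/setUP: pM ip => /imsetP [x xM ->].
    by rewrite incident_lift; exists x.
  by rewrite incident_lshift_cross => /eqP fx_i; rewrite -fx_i imset_f in i_free.
- move=> i q; rewrite !inE => qM iq; apply/imsetP => -[j _ i_fj].
  have := disjoint (lshift n i) _ _ qM (f_partner j).
  rewrite incident_lift iq incident_lshift_cross i_fj eqxx.
  by move=> /(_ isT isT) /(congr1 snd) /eqP; rewrite eq_lrshift.
- move=> i q q'; rewrite !inE => qM q'M iq iq'.
  apply: (map_pair_inj (@lshift_inj m n)); apply: (disjoint (lshift n i)) => //;
  by rewrite incident_lift.
Qed.

End Partner.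

Lemma left_part_matching M : perfect_matching_on setT M -> left_anchored M ->
  (#|covered (left_part M)| == m - n)%N && is_matching (left_part M).
Proof.
move=> M_perfect M_anchored; have [f f_partner] := exists_partner M_perfect M_anchored.
have f_inj := partner_inj M_perfect f_partner.
have M'_perfect := left_part_perfect M_perfect M_anchored f_partner.
rewrite /is_matching (perfect_matching_on_covered M'_perfect) M'_perfect andbT.
by rewrite cardsCs setCK card_ord (card_imset _ f_inj) cardsT card_ord.
Qed.

Section Extension.

Variables (S : {set 'I_m}) (M' : {set 'I_m * 'I_m}) (f : 'I_n -> 'I_m).
Hypotheses (M'_perfect : perfect_matching_on S M') (f_inj : injective f).
Hypotheses (f_out : forall j, f j \notin S) (card_out : #|~: S| = n).

Lemma left_part_extend : left_part (extend_matching M' f) = M'.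
Proof.
apply/setP => q; rewrite inE in_setU; apply/orP/idP => [[] /imsetP [x xM] | qM].
- by move/(map_pair_inj (@lshift_inj m n)) ->.
- by move=> /(congr1 snd) /= /eqP; rewrite eq_lrshift.
by left; exact: imset_f.
Qed.

Lemma extend_matching_anchored : left_anchored (extend_matching M' f).
Proof.
apply/forall_inP => p /setUP [] /imsetP [x _ ->].
  exact: (ltn_ord x.1).
exact: (ltn_ord (f x)).
Qed.

Let f_onto i : i \notin S -> exists j, i = f j.
Proof.
move=> iS; have im_out : f @: setT \subset ~: S.
  by apply/subsetP => _ /imsetP [j _ ->]; rewrite inE f_out.
have card_im : #|f @: setT| = #|~: S| by rewrite card_imset // cardsT card_ord card_out.
have /imsetP [j _ ->] : i \in f @: setT by rewrite (subset_cardP card_im im_out) inE.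
by exists j.
Qed.

Let extend_matching_disjoint x p p' :
  p \in extend_matching M' f -> p' \in extend_matching M' f ->
  incident x p -> incident x p' -> p = p'.
Proof.
have /perfect_matching_onP [_ _ inside disjoint] := M'_perfect.
case: (split_ordP x) => [i -> | j ->].
  case/setUP => /imsetP [q qM ->]; case/setUP => /imsetP [q' q'M ->];
    rewrite ?incident_lift ?incident_lshift_cross.
  - by move=> iq iq'; rewrite (disjoint i q q').
  - by move=> iq /eqP fq'_i; move: (f_out q'); rewrite fq'_i (inside i q qM iq).
  - by move=> /eqP fq_i iq'; move: (f_out q); rewrite fq_i (inside i q' q'M iq').
  - by move=> /eqP <- /eqP /f_inj ->.
case/setUP => /imsetP [q _ ->]; rewrite ?incident_rshift_lift // incident_rshift_cross.
case/setUP => /imsetP [q' _ ->]; rewrite ?incident_rshift_lift // incident_rshift_cross.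
by move=> /eqP -> /eqP ->.
Qed.

Lemma extend_matching_perfect : perfect_matching_on setT (extend_matching M' f).
Proof.
have /perfect_matching_onP [ordered covers _ _] := M'_perfect.
apply/perfect_matching_onP.
split => [p | x _ | x p _ _ | ]; last exact: extend_matching_disjoint.
- case/setUP => /imsetP [x xM ->] /=; first exact: ordered.
  exact: leq_trans (ltn_ord _) (leq_addr _ _).
- have cross_in j : (lshift n (f j), rshift m j) \in extend_matching M' f.
    by apply/setUP; right; apply/imsetP; exists j.
  case: (split_ordP x) => [i -> | j ->]; last first.
    by exists (lshift n (f j), rshift m j); rewrite ?cross_in ?incident_rshift_cross.
  have [iS | /f_onto [j ->]] := boolP (i \in S); last first.
    by exists (lshift n (f j), rshift m j); rewrite ?cross_in ?incident_lshift_cross.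
  have [q qM iq] := covers i iS; exists (map_pair (lshift n) q); last by rewrite incident_lift.
  by apply/setUP; left; exact: imset_f.
- exact: in_setT.
Qed.

End Extension.

Lemma extend_matching_inj (M' : {set 'I_m * 'I_m}) (f g : 'I_n -> 'I_m) :
  extend_matching M' f = extend_matching M' g -> f =1 g.
Proof.
move=> fg j; have : (lshift n (f j), rshift m j) \in extend_matching M' g.
  by rewrite -fg; apply/setUP; right; apply/imsetP; exists j.
case/setUP => /imsetP [x _]; first by move=> /(congr1 snd) /eqP; rewrite eq_rlshift.
by case=> /val_inj -> /addnI /val_inj ->.
Qed.

Lemma card_left_part_fiber (S : {set 'I_m}) (M' : {set 'I_m * 'I_m}) :
  perfect_matching_on S M' -> #|~: S| = n ->
  #|[set M | perfect_matching_on setT M && left_anchored M && (left_part M == M')]| = n`!.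
Proof.
move=> M'_perfect card_out.
pose injections := [set g : {ffun 'I_n -> 'I_m} in ffun_on [predC S] | injectiveb g].
have -> : [set M | perfect_matching_on setT M && left_anchored M && (left_part M == M')]
    = (fun g : {ffun 'I_n -> 'I_m} => extend_matching M' g) @: injections.
  apply/setP => M; rewrite inE; apply/idP/imsetP.
  - case/andP => /andP [M_perfect M_anchored] /eqP M_left.
    have [g g_partner] := exists_partner M_perfect M_anchored.
    exists g; last by rewrite -M_left extend_left_part.
    have g_inj := partner_inj M_perfect g_partner.
    rewrite inE; apply/andP; split; last exact/injectiveP.
    apply/ffun_onP => j; rewrite inE /= -(perfect_matching_on_covered M'_perfect) -M_left.
    rewrite (perfect_matching_on_covered (left_part_perfect M_perfect M_anchored g_partner)).
    by rewrite inE negbK imset_f.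
  - case=> g; rewrite inE => /andP [/ffun_onP g_out /injectiveP g_inj] ->.
    rewrite (extend_matching_perfect M'_perfect g_inj g_out card_out).
    by rewrite extend_matching_anchored left_part_extend eqxx.
rewrite card_in_imset => [|g1 g2 _ _ /extend_matching_inj /ffunP //].
rewrite card_inj_ffuns_on card_ord -ffactnn; congr (_ ^_ _).
by rewrite -card_out; apply: eq_card => i; rewrite !inE.
Qed.

Section BlockWeights.

Variables (R : comNzRingType) (A : 'M[R]_m).
Local Notation B := (block_mx A (const_mx 1) (const_mx 1) 0 : 'M[R]_(m + n)).

Lemma matching_weight_block_nonanchored M :
  perfect_matching_on setT M -> ~~ left_anchored M -> matching_weight B M = 0.
Proof.
case/perfect_matching_onP => ordered _ _ _ /forall_inPn [[a b] pM].
rewrite /matching_weight (bigD1 (a, b)) //=.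
case: (split_ordP a) (ordered _ pM) => // j -> /= lt_ab _.
case: (split_ordP b) lt_ab => [i -> | j' ->] /=.
  by move=> /ltn_trans /(_ (ltn_ord i)); rewrite ltnNge leq_addr.
by rewrite block_mxEdr mxE mul0r.
Qed.

Lemma matching_weight_block_anchored M :
  left_anchored M -> matching_weight B M = matching_weight A (left_part M).
Proof.
move=> M_anchored; rewrite /matching_weight.
rewrite (bigID (fun p : 'I_(m + n) * 'I_(m + n) => p.2 < m)%N) /=.
rewrite [X in _ * X]big1 ?mulr1 => [|[a b] /= /andP [pM]]; last first.
  case: (split_ordP a) (forall_inP M_anchored _ pM) => // i -> _.
  by case: (split_ordP b) => // j -> _; rewrite block_mxEur mxE.
transitivity (\prod_(p in map_pair (lshift n) @: left_part M) B p.1 p.2).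
  apply: eq_bigl => -[a b]; apply/andP/imsetP => [[pM] | [x xM [-> ->]]] /=.
    case: (split_ordP a) (forall_inP M_anchored _ pM) (pM) => // i -> _ {}pM.
    by case: (split_ordP b) (pM) => // i' -> {}pM _; exists (i, i'); rewrite ?inE.
  by rewrite inE in xM; rewrite ltn_ord.
rewrite big_imset => [|q q' _ _]; last exact/map_pair_inj/lshift_inj.
by apply: eq_bigr => q _; rewrite block_mxEul.
Qed.

End BlockWeights.

End BlockMatchings.

Lemma haf_block_ones (R : comNzRingType) m n (A : 'M[R]_m) : (n <= m)%N ->
  haf (block_mx A (const_mx 1) (const_mx 1) 0 : 'M[R]_(m + n)) =
  (\sum_(M | (#|covered M| == m - n)%N && is_matching M) matching_weight A M) *+ n`!.
Proof.
move=> le_nm; rewrite hafE (bigID (@left_anchored m n)) /= [X in _ + X]big1 ?addr0; last first.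
  by move=> M /andP []; exact: matching_weight_block_nonanchored.
rewrite -sumrMnl (partition_big (@left_part m n)
  (fun M' => (#|covered M'| == m - n)%N && is_matching M')) /=; last first.
  by move=> M /andP []; exact: left_part_matching.
apply: eq_bigr => M' /andP [/eqP card_M' M'_matching].
have card_out : #|~: covered M'| = n by rewrite cardsCs setCK card_ord card_M' subKn.
rewrite -(card_left_part_fiber M'_matching card_out) -sumr_const.
apply: eq_big => [M | M /andP [/andP [_ M_anchored] /eqP <-]]; first by rewrite inE.
exact: matching_weight_block_anchored.
Qed.

Unset Implicit Arguments.
Set Strict Implicit.

Theorem theorem3p1 (R : realFieldType) (m : nat) (A : 'M[R]_m) (k : nat)
  (hm : (2 <= m)%N)
  (hsym : A^T = A)
  (hdiag : forall i : 'I_m, A i i = 0)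
  (hnneg : forall i j : 'I_m, 0 <= A i j)
  (hk1 : (1 <= k)%N) (hk2 : (k <= m./2)%N) :
  haf_k k A = haf (A_k k A) / ((m - 2 * k)`!)%:R.
Proof.
have le_2k_m : (2 * k <= m)%N by rewrite mul2n -geq_half_double.
rewrite haf_kE /A_k haf_block_ones ?leq_subr // subKn // -[in X in X / _]mulr_natr mulfK //.
by rewrite pnatr_eq0 -lt0n fact_gt0.
Qed.
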